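(* Let $f(y_1,\dots,y_m)\in\mathbb{R}\langle Y\rangle$ be a multilinear (ordinary, noncommutative) polynomial, and consider its image \[ f(\mathrm{Sym}_2)=\{f(a_1,\dots,a_m): a_1,\dots,a_m\in M_2(\mathbb{R}) \text{ symmetric}\}. \] Let $I$ be the identity matrix, $e_1=\begin{pmatrix}1&0\\0&-1\end{pmatrix}$, $e_2=\begin{pmatrix}0&1\\1&0\end{pmatrix}$ and $E=e_1e_2=\begin{pmatrix}0&1\\-1&0\end{pmatrix}$. Then $f(\mathrm{Sym}_2)$ is one of the following: (1) $\{0\}$; (2) the set $\mathbb{R}\cdot E$ of all skew-symmetric matrices; (3) $\mathbb{R}\cdot I$, the set of scalar matrices; (4) the set $\mathrm{span}\{e_1,e_2\}$ of traceless symmetric matrices; (5) $\mathbb{R}\cdot I\oplus\mathbb{R}\cdot E$; (6) $sl_2(\mathbb{R})$, the set of all traceless matrices; (7) the set of all symmetric matrices; (8) a set containing a basis of $M_2(\mathbb{R})$.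
   Context: $\mathbb{R}\langle Y\rangle$ denotes the free associative algebra over $\mathbb{R}$ on the variables $Y=\{y_1,y_2,\dots\}$. A polynomial is multilinear if every variable occurs exactly once in each of its monomials. Symmetric and skew-symmetric refer to the transpose. *)

From HB Require Import structures.
From mathcomp Require Import all_boot all_order all_algebra all_fingroup.
From mathcomp Require Import reals.
Set Implicit Arguments. Unset Strict Implicit. Unset Printing Implicit Defensive.
Import Order.TTheory GRing.Theory Num.Theory.
Local Open Scope ring_scope.

(* A multilinear polynomial f(y_1,...,y_m) in the free algebra R<Y> is uniquely
   f = \sum_{sigma in S_m} c_sigma y_{sigma(0)} y_{sigma(1)} ... y_{sigma(m-1)};
   we represent it by its coefficient family c : {ffun 'S_m -> R}. *)
Definition multilin_eval (R : nzRingType) (m n : nat) (c : {ffun 'S_m -> R})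
  (a : 'I_m -> 'M[R]_n.+1) : 'M[R]_n.+1 :=
  \sum_(s : 'S_m) c s *: \prod_(i < m) a (s i).

Definition image_Sym2 (R : nzRingType) (m : nat) (c : {ffun 'S_m -> R})
  (X : 'M[R]_2) : Prop :=
  exists a : 'I_m -> 'M[R]_2, (forall i, (a i)^T = a i) /\ X = multilin_eval c a.

Definition e1 (R : nzRingType) : 'M[R]_2 :=
  \matrix_(i < 2, j < 2) (if i == j then (if i == 0 :> nat then 1 else -1) else 0).
Definition e2 (R : nzRingType) : 'M[R]_2 :=
  \matrix_(i < 2, j < 2) (if i == j then 0 else 1).
Definition Emx (R : nzRingType) : 'M[R]_2 := e1 R * e2 R.

From HB Require Import structures.
From mathcomp Require Import all_boot all_order all_algebra all_fingroup.
From mathcomp Require Import reals boolp.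
From mathcomp Require Import ring lra.
Import Order.TTheory GRing.Theory Num.Theory.
Local Open Scope ring_scope.
Set Implicit Arguments. Unset Strict Implicit.

(* The matrices cliff (a, b) = e1^a e2^b, i.e. I, e1, e2 and E = e1 e2, form a
   basis of M_2 that is closed under products up to sign, and I, e1, e2 span
   the symmetric matrices. Hence f evaluated at a word of these letters is a
   multiple of the basis element indexed by the parities of the numbers of e1's
   and of e2's in the word; say that this index occurs in f when some such value
   is nonzero. By multilinearity, every coordinate of the image along a
   non-occurring index vanishes. Conversely, the image is closed under scaling
   and under the conjugations X |-> M^T X M with M M^T scalar: conjugating by
   e1 + e2 swaps e1 and e2, so e1 occurs iff e2 does, and the rotations x - z E
   fix I and E up to scale while acting transitively on the lines of the plane
   span(e1, e2). When two classes of indices both occur, take two words of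
   minimal Hamming distance realising them: all their intermediate mixtures
   vanish, so expanding f at the mixed arguments puts the whole plane spanned by
   the two basis elements in the image. *)

Section MultilinearEval.

Variables (R : comNzRingType) (n m : nat) (c : {ffun 'S_m -> R}).
Local Notation F := (@multilin_eval R m n c).

Lemma eq_multilin_eval (a b : 'I_m -> 'M[R]_n.+1) : a =1 b -> F a = F b.
Proof.
by move=> eq_ab; apply: eq_bigr => s _; congr (_ *: _); apply: eq_bigr => i _.
Qed.

Lemma multilin_evalZ (k : 'I_m -> R) (a : 'I_m -> 'M[R]_n.+1) :
  F (fun i => k i *: a i) = \prod_i k i *: F a.
Proof.
rewrite /multilin_eval scaler_sumr; apply: eq_bigr => s _.
by rewrite scaler_prod [\prod_i k i](reindex_perm s) scalerA mulrC -scalerA.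
Qed.

Lemma multilin_evalZ_at j (t : R) (a : 'I_m -> 'M[R]_n.+1) :
  F (fun i => (if i == j then t else 1) *: a i) = t *: F a.
Proof. by rewrite multilin_evalZ -big_mkcond big_pred1_eq. Qed.

Lemma multilin_eval_sum (A : finType) (k : 'I_m -> A -> R)
    (L : 'I_m -> A -> 'M[R]_n.+1) :
  F (fun i => \sum_u k i u *: L i u) =
  \sum_(w : {ffun 'I_m -> A}) \prod_i k i (w i) *: F (fun i => L i (w i)).
Proof.
rewrite /multilin_eval (eq_bigr _ (fun w _ => scaler_sumr _ _ _ _)) exchange_big.
apply: eq_bigr => s _; rewrite bigA_distr_bigA scaler_sumr.
rewrite (reindex (fun w : {ffun 'I_m -> A} => [ffun i => w (s i)])) /=; last first.
  exists (fun w => [ffun i => w (s^-1 i)%g]) => w _; apply/ffunP => i.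
    by rewrite !ffunE permKV.
  by rewrite !ffunE permK.
apply: eq_bigr => w _; rewrite scaler_prod !scalerA mulrC.
rewrite [\prod_(i < m) k i (w i)](reindex_perm s).
by congr ((_ * _) *: _); apply: eq_bigr => i _; rewrite ffunE.
Qed.

(* Expanding f at x + y on D gives one term per subset W of D; only the
   terms W = set0 and W = D survive. *)
Lemma multilin_eval_mix (x y : 'I_m -> 'M[R]_n.+1) (D : {set 'I_m}) :
  D != set0 -> {in ~: D, x =1 y} ->
  (forall W : {set 'I_m}, W \subset D -> W != set0 -> W != D ->
     F (fun i => if i \in W then y i else x i) = 0) ->
  F (fun i => if i \in D then x i + y i else x i) = F x + F y.
Proof.
move=> /set0Pn [j jD] eq_xy mix_eq0.
pose k i (u : bool) : R := if u then (i \in D)%:R else 1.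
pose L i (u : bool) := if u then y i else x i.
rewrite (eq_multilin_eval (b := fun i => \sum_u k i u *: L i u)) => [|i]; last first.
  rewrite big_bool /k /L /= scale1r.
  by case: (i \in D); rewrite ?scale1r ?scale0r ?add0r // addrC.
rewrite multilin_eval_sum.
pose w_of (W : {set 'I_m}) : {ffun 'I_m -> bool} := [ffun i => i \in W].
have w_ofP (w : {ffun 'I_m -> bool}) : w_of [set i | w i] = w.
  by apply/ffunP => i; rewrite ffunE inE.
have neq_w : w_of D != w_of set0 by apply/eqP => /ffunP /(_ j); rewrite !ffunE jD inE.
rewrite (bigD1 (w_of set0)) // (bigD1 (w_of D)) /=; last by rewrite neq_w.
rewrite [X in _ + (_ + X)]big1 ?addr0; first congr (_ + _).
- rewrite big1 => [|i _]; last by rewrite ffunE inE.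
  by rewrite scale1r; apply: eq_multilin_eval => i; rewrite ffunE inE.
- rewrite big1 => [|i _]; last by rewrite ffunE /k; case: (i \in D).
  rewrite scale1r; apply: eq_multilin_eval => i; rewrite ffunE /L.
  by case: ifPn => // iD; apply: eq_xy; rewrite inE.
move=> w /andP [ne_w0 ne_wD].
have [/existsP [i /andP [wi iD]] | /existsPn sub_wD] :=
  boolP [exists i, w i && (i \notin D)].
  by rewrite (bigD1 i) //= /k wi (negbTE iD) mul0r scale0r.
rewrite (eq_multilin_eval (b := fun i => if i \in [set i | w i] then y i else x i));
  last by move=> i; rewrite inE.
rewrite mix_eq0 ?scaler0 //.
- by apply/subsetP => i; rewrite inE => wi; move: (sub_wD i); rewrite wi negbK.
- by apply: contraNneq ne_w0 => W0; rewrite -W0 w_ofP.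
by apply: contraNneq ne_wD => WD; rewrite -WD w_ofP.
Qed.

End MultilinearEval.

Section Conjugation.

Variables (R : comNzRingType) (n m : nat) (c : {ffun 'S_m -> R}).
Variables (N M : 'M[R]_n.+1) (r : R).
Hypotheses (MN : M * N = r%:M) (NM : N * M = r%:M).

Lemma prod_conj k (a : 'I_k -> 'M[R]_n.+1) :
  r *: \prod_i (N * a i * M) = r ^+ k *: (N * \prod_i a i * M).
Proof.
elim: k a => [|k IHk] a; first by rewrite !big_ord0 scale1r mulr1 NM scalemx1.
rewrite !big_ord_recr /= scalerAl IHk -scalerAl exprSr -scalerA; congr (_ *: _).
rewrite !mulrA -[N * _ * M * N]mulrA MN -scalemx1 -scalerAr mulr1.
by rewrite -!scalerAl.
Qed.

Lemma multilin_eval_conj (a : 'I_m -> 'M[R]_n.+1) :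
  r *: multilin_eval c (fun i => N * a i * M) =
  r ^+ m *: (N * multilin_eval c a * M).
Proof.
rewrite /multilin_eval scaler_sumr mulr_sumr mulr_suml scaler_sumr.
apply: eq_bigr => s _; rewrite scalerA mulrC -scalerA prod_conj.
by rewrite -scalerAr -scalerAl !scalerA mulrC.
Qed.

End Conjugation.

Lemma ord2P (i : 'I_2) : i = ord0 \/ i = ord_max.
Proof. by case: i => [[|[|k]]] h; [left|right|]; try apply: val_inj. Qed.

Lemma widen_ord2 : widen_ord (leqnSn 1) ord_max = ord0 :> 'I_2.
Proof. exact: val_inj. Qed.

Ltac mx2_entries := let i := fresh "i" in let j := fresh "j" in
  apply/matrixP => i j; case: (ord2P i) => ->; case: (ord2P j) => ->;
  do 4 (rewrite ?mxE ?big_ord_recr ?big_ord0 ?widen_ord2 /=).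

Ltac mx2_ring := mx2_entries; ring.

Section Clifford.

Variable R : comNzRingType.

Definition cliff (u : bool * bool) : 'M[R]_2 := e1 R ^+ u.1 * e2 R ^+ u.2.

Lemma cliffE : (cliff (false, false) = 1) * (cliff (true, false) = e1 R) *
  (cliff (false, true) = e2 R) * (cliff (true, true) = Emx R).
Proof. by do !split; rewrite /cliff /= ?expr0 ?expr1 ?mulr1 ?mul1r. Qed.

Lemma cliffM u v : cliff u * cliff v =
  (-1) ^+ (u.2 && v.1) *: cliff (u.1 (+) v.1, u.2 (+) v.2).
Proof.
by case: u v => [[] []] [[] []]; rewrite /cliff /= ?expr0 ?expr1 /e1 /e2; mx2_ring.
Qed.

Lemma trmx_cliff u : (cliff u)^T = (-1) ^+ (u.1 && u.2) *: cliff u.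
Proof. by case: u => [[] []]; rewrite /cliff /= ?expr0 ?expr1 /e1 /e2; mx2_ring. Qed.

Lemma trmx_cliff_sym u : ~~ (u.1 && u.2) -> (cliff u)^T = cliff u.
Proof. by rewrite trmx_cliff => /negbTE ->; rewrite scale1r. Qed.

Definition word_deg k (w : 'I_k -> bool * bool) : bool * bool :=
  (odd (\sum_i (w i).1)%N, odd (\sum_i (w i).2)%N).

Lemma word_deg_perm k (w : 'I_k -> bool * bool) (s : 'S_k) :
  word_deg (fun i => w (s i)) = word_deg w.
Proof.
rewrite /word_deg [(\sum_i (w i).1)%N](reindex_perm s).
by rewrite [(\sum_i (w i).2)%N](reindex_perm s).
Qed.

Lemma prod_cliff k (w : 'I_k -> bool * bool) :
  exists eps : R, \prod_i cliff (w i) = eps *: cliff (word_deg w).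
Proof.
elim: k w => [|k IHk] w.
  by exists 1; rewrite /word_deg !big_ord0 scale1r cliffE.
have [eps IHw] := IHk (fun i => w (widen_ord (leqnSn k) i)).
rewrite big_ord_recr /= IHw -scalerAl cliffM scalerA /word_deg !big_ord_recr /=.
by rewrite !oddD !oddb; eexists.
Qed.

End Clifford.

Section CliffordCoordinates.

Variable R : numFieldType.

Let two_neq0 : (2 : R) != 0. Proof. by rewrite pnatr_eq0. Qed.

(* The basis cliff is orthogonal for the trace form (A, B) |-> \tr (A^T B),
   each basis matrix having square norm 2. *)
Definition cliff_coord (u : bool * bool) (X : 'M[R]_2) : R^o :=
  \tr ((cliff R u)^T *m X) / 2.

Fact cliff_coord_is_linear u : linear (cliff_coord u).
Proof.
move=> a X Y.
by rewrite /cliff_coord mulmxDr mxtraceD -scalemxAr mxtraceZ mulrDl -mulrA.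
Qed.

HB.instance Definition _ u :=
  GRing.isLinear.Build R 'M[R]_2 R^o _ (cliff_coord u) (cliff_coord_is_linear u).

Arguments cliff_coord : simpl never.

Lemma cliff_coordZ u a X : cliff_coord u (a *: X) = a * cliff_coord u X.
Proof. exact: linearZ. Qed.

Lemma cliff_coord_cliff u v : cliff_coord u (cliff R v) = (u == v)%:R.
Proof.
by case: u v => [[] []] [[] []]; rewrite cliffE /cliff_coord /mxtrace /e1 /e2 /Emx;
  do 4 (rewrite ?mxE ?big_ord_recr ?big_ord0 /=); field.
Qed.

Lemma cliff_neq0 u : cliff R u != 0.
Proof.
apply/eqP => u0; have /eqP := cliff_coord_cliff u u.
by rewrite u0 linear0 eqxx eq_sym oner_eq0.
Qed.

Lemma cliff_coord_decompE (X : 'M[R]_2) :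
  X = cliff_coord (false, false) X *: 1 + cliff_coord (true, false) X *: e1 R +
      cliff_coord (false, true) X *: e2 R + cliff_coord (true, true) X *: Emx R.
Proof. by rewrite /cliff_coord !cliffE /mxtrace /e1 /e2 /Emx; mx2_entries; field. Qed.

Lemma cliff_coord_decomp (X : 'M[R]_2) :
  X = \sum_(u : bool * bool) cliff_coord u X *: cliff R u.
Proof.
have -> : \sum_(u : bool * bool) cliff_coord u X *: cliff R u =
    \sum_(a : bool) \sum_(b : bool) cliff_coord (a, b) X *: cliff R (a, b).
  by rewrite pair_bigA; apply: eq_bigr => -[].
by rewrite !big_bool /= !cliffE /cliff_coord /mxtrace /e1 /e2 /Emx; mx2_entries; field.
Qed.

Lemma cliff_coord_tr (X : 'M[R]_2) : cliff_coord (false, false) X = \tr X / 2.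
Proof. by rewrite /cliff_coord cliffE trmx1 mul1mx. Qed.

Lemma cliff_coord_sym (X : 'M[R]_2) : X^T = X -> cliff_coord (true, true) X = 0.
Proof.
move/matrixP => /(_ ord0 ord_max); rewrite mxE => X10.
by rewrite /cliff_coord cliffE /mxtrace /Emx /e1 /e2;
  do 4 (rewrite ?mxE ?big_ord_recr ?big_ord0 ?widen_ord2 /=); rewrite X10; field.
Qed.

End CliffordCoordinates.

Section ImageSym2.

Variables (R : numFieldType) (m : nat) (c : {ffun 'S_m -> R}).
Local Notation F := (@multilin_eval R m 1 c).
Local Notation S := (image_Sym2 c).

Definition sym_word (w : 'I_m -> bool * bool) := forall i, ~~ ((w i).1 && (w i).2).

Definition eval_word (w : 'I_m -> bool * bool) := F (fun i => cliff R (w i)).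

Definition occurs (T : bool * bool) :=
  exists w, [/\ sym_word w, word_deg w = T & eval_word w != 0].

Lemma eval_wordE w : exists l : R, eval_word w = l *: cliff R (word_deg w).
Proof.
rewrite /eval_word /multilin_eval; elim/big_ind: _.
- by exists 0; rewrite scale0r.
- by move=> _ _ [l1 ->] [l2 ->]; exists (l1 + l2); rewrite scalerDl.
move=> s _; have [eps ->] := prod_cliff R (fun i => w (s i)).
by rewrite word_deg_perm scalerA; eexists.
Qed.

Lemma image_eval_word w : sym_word w -> S (eval_word w).
Proof.
by move=> sw; exists (fun i => cliff R (w i)); split => // i; apply: trmx_cliff_sym.
Qed.

Lemma cliff_coord_eval_word T w :
  ~ occurs T -> sym_word w -> cliff_coord T (eval_word w) = 0.
Proof.
move=> notT sw; have [l Ew] := eval_wordE w.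
rewrite Ew cliff_coordZ cliff_coord_cliff.
have [degT|] := eqVneq T (word_deg w); last by rewrite mulr0.
suff /eqP -> : l == 0 by rewrite mul0r.
apply: contra_notP notT => /negP l0; exists w; split => //.
by rewrite Ew scaler_eq0 negb_or l0 cliff_neq0.
Qed.

Lemma cliff_coord_image T X : ~ occurs T -> S X -> cliff_coord T X = 0.
Proof.
move=> notT [a [sym_a ->]].
rewrite (eq_multilin_eval c (fun i => cliff_coord_decomp (a i))) multilin_eval_sum.
rewrite linear_sum big1 // => w _; rewrite linearZ /=.
have [sw | /forallPn [i /negPn wiE]] := boolP [forall i, ~~ ((w i).1 && (w i).2)].
  by rewrite cliff_coord_eval_word ?scaler0 //; apply/forallP.
rewrite (bigD1 i) //=; move: wiE; case: (w i) => [[] []] // _.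
by rewrite cliff_coord_sym // mul0r scale0r.
Qed.

Definition mix (W : {set 'I_m}) (w w' : 'I_m -> bool * bool) i :=
  if i \in W then w' i else w i.

Definition word_diff (w w' : 'I_m -> bool * bool) := [set i | w i != w' i].

Definition witness (A : pred (bool * bool)) w :=
  [/\ sym_word w, A (word_deg w) & eval_word w != 0].

Lemma sym_mix (W : {set 'I_m}) w w' :
  sym_word w -> sym_word w' -> sym_word (mix W w w').
Proof. by move=> sw sw' i; rewrite /mix; case: ifP. Qed.

Lemma word_diff_mixl (W : {set 'I_m}) w w' :
  word_diff (mix W w w') w' = word_diff w w' :\: W.
Proof. by apply/setP => i; rewrite !inE /mix; case: ifP; rewrite ?eqxx. Qed.

Lemma word_diff_mixr (W : {set 'I_m}) w w' :
  W \subset word_diff w w' -> word_diff w (mix W w w') = W.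
Proof.
move/subsetP => sWD; apply/setP => i; rewrite !inE /mix.
by case: ifPn => [/sWD | _]; rewrite ?inE ?eqxx.
Qed.

(* If some proper nonempty mixture W is nonzero, it replaces one end of the
   pair, which shrinks the set of positions where the two words differ. *)
Lemma minimal_pair (A B : pred (bool * bool)) w w' :
  (forall T, occurs T -> A T || B T) -> witness A w -> witness B w' ->
  exists w w', [/\ witness A w, witness B w' &
    forall W : {set 'I_m}, W \subset word_diff w w' -> W != set0 ->
      W != word_diff w w' -> eval_word (mix W w w') = 0].
Proof.
move=> AB_cover; have [n] := ubnP #|word_diff w w'|.
elim: n w w' => // n IHn w w' lt_diff [sw Aw nzw] [sw' Bw' nzw'].
rewrite ltnS in lt_diff.
pose bad (W : {set 'I_m}) := [&& W \subset word_diff w w', W != set0,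
  W != word_diff w w' & eval_word (mix W w w') != 0].
have [/existsP [W /and4P [sWD W0 WD nz_mix]] | /existsPn no_bad] :=
  boolP [exists W, bad W]; last first.
  exists w, w'; split => // W sWD W0 WD; apply/eqP.
  by move: (no_bad W); rewrite /bad sWD W0 WD negbK.
have sym_mix_W : sym_word (mix W w w') by apply: sym_mix.
have occ_mix : occurs (word_deg (mix W w w')) by exists (mix W w w').
case/orP: (AB_cover _ occ_mix) => [A_mix | B_mix].
  apply: (IHn (mix W w w') w') => //; apply: leq_trans lt_diff.
  rewrite word_diff_mixl cardsD (setIidPr sWD) ltn_subrL card_gt0 W0.
  by rewrite (leq_trans _ (subset_leq_card sWD)) // card_gt0.
apply: (IHn w (mix W w w')) => //; apply: leq_trans lt_diff.
by rewrite word_diff_mixr //; apply: proper_card; rewrite properEneq WD.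
Qed.

Lemma image_mix_span w w' : sym_word w -> sym_word w' -> word_deg w != word_deg w' ->
  (forall W : {set 'I_m}, W \subset word_diff w w' -> W != set0 ->
     W != word_diff w w' -> eval_word (mix W w w') = 0) ->
  forall s t, S (s *: eval_word w + t *: eval_word w').
Proof.
move=> sw sw' deg_ne mix_eq0 s t; set D := word_diff w w'.
have /set0Pn [j jD] : D != set0.
  apply: contraNneq deg_ne => D0; suff -> : w = w' by []; apply: funext => i.
  by apply/eqP; apply: contraFT (in_set0 i); rewrite -D0 inE.
pose x i := (if i == j then s else 1) *: cliff R (w i).
pose y i := (if i == j then t else 1) *: cliff R (w' i).
have <- : F (fun i => if i \in D then x i + y i else x i) =
          s *: eval_word w + t *: eval_word w'.
  rewrite (multilin_eval_mix (x := x) (y := y)) ?multilin_evalZ_at //.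
  - by apply/set0Pn; exists j.
  - move=> i; rewrite !inE negbK /x /y => /eqP ww'.
    by rewrite ww'; case: eqP => // ij; move: jD; rewrite -ij inE ww' eqxx.
  move=> W sWD W0 WD.
  rewrite (eq_multilin_eval c (b := fun i =>
    (if i == j then if i \in W then t else s else 1) *: cliff R (mix W w w' i))).
    by rewrite multilin_evalZ -[F _]/(eval_word (mix W w w')) mix_eq0 ?scaler0.
  by move=> i; rewrite /x /y /mix; case: (i \in W).
exists (fun i => if i \in D then x i + y i else x i); split => // i.
by case: ifP; rewrite ?linearD /= !linearZ /= !trmx_cliff_sym.
Qed.

Lemma occurs_pair (A B : pred (bool * bool)) :
  (forall T, A T -> ~~ B T) -> (forall T, occurs T -> A T || B T) ->
  (exists2 T, A T & occurs T) -> (exists2 T, B T & occurs T) ->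
  exists TA TB, [/\ A TA, B TB & forall s t, S (s *: cliff R TA + t *: cliff R TB)].
Proof.
move=> AnB AB_cover [TA ATA [w [sw degw nzw]]] [TB BTB [w' [sw' degw' nzw']]].
have wA : witness A w by split; rewrite ?degw.
have wB : witness B w' by split; rewrite ?degw'.
have [v [v' [[sv Av nzv] [sv' Bv' nzv'] mix_eq0]]] := minimal_pair AB_cover wA wB.
have [l El] := eval_wordE v; have [l' El'] := eval_wordE v'.
exists (word_deg v), (word_deg v'); split => // s t.
have l0 : l != 0 by apply: contraNneq nzv => l0; rewrite El l0 scale0r.
have l'0 : l' != 0 by apply: contraNneq nzv' => l'0; rewrite El' l'0 scale0r.
have deg_ne : word_deg v != word_deg v'.
  by apply: contraTneq Av => ->; apply: contraL (AnB _) Bv'.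
have := image_mix_span sv sv' deg_ne mix_eq0 (s / l) (t / l').
by rewrite El El' !scalerA !mulfVK.
Qed.

Hypothesis m_gt0 : (0 < m)%N.

Lemma imageZ t X : S X -> S (t *: X).
Proof.
case=> a [sym_a ->]; pose j := Ordinal m_gt0.
exists (fun i => (if i == j then t else 1) *: a i).
by split; [move=> i; rewrite linearZ /= sym_a | rewrite multilin_evalZ_at].
Qed.

Lemma image0 : S 0.
Proof.
have : S (F (fun=> 0)) by exists (fun=> 0); split => // i; rewrite trmx0.
by move/(imageZ 0); rewrite scale0r.
Qed.

Lemma image_conj (M : 'M[R]_2) (r : R) X : r != 0 ->
  M * M^T = r%:M -> M^T * M = r%:M -> S X -> S (M^T * X * M).
Proof.
move=> r0 MMt MtM [a [sym_a ->]].
have -> : M^T * F a * M = (r / r ^+ m) *: F (fun i => M^T * a i * M).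
  rewrite mulrC -scalerA (multilin_eval_conj _ MMt MtM) scalerA.
  by rewrite mulVf ?scale1r // expf_neq0.
apply: imageZ; exists (fun i => M^T * a i * M); split => // i.
by rewrite -!mulmxE !trmx_mul trmxK sym_a mulmxA.
Qed.

Lemma occursP T : occurs T -> exists2 l : R, l != 0 & S (l *: cliff R T).
Proof.
case=> w [sw <- nz]; have [l Ew] := eval_wordE w; exists l.
  by apply: contraNneq nz => l0; rewrite Ew l0 scale0r.
by rewrite -Ew; apply: image_eval_word.
Qed.

Lemma image_line T t : occurs T -> S (t *: cliff R T).
Proof. by case/occursP => l l0 /(imageZ (t / l)); rewrite scalerA mulfVK. Qed.

Lemma occurs_conj (M : 'M[R]_2) (r k : R) T T' : r != 0 -> k != 0 ->
  M * M^T = r%:M -> M^T * M = r%:M -> M^T * cliff R T * M = k *: cliff R T' ->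
  occurs T -> occurs T'.
Proof.
move=> r0 k0 MMt MtM conjT /occursP [l l0 /(image_conj r0 MMt MtM)].
rewrite -scalerAr -scalerAl conjT scalerA => image_T'.
apply: contrapT => /cliff_coord_image /(_ image_T').
by rewrite cliff_coordZ cliff_coord_cliff eqxx mulr1; apply/eqP/mulf_neq0.
Qed.

Lemma occurs_e1_e2 : occurs (true, false) <-> occurs (false, true).
Proof.
have two0 : (2 : R) != 0 by rewrite pnatr_eq0.
pose P := e1 R + e2 R.
have [PPt PtP] : P * P^T = 2%:M /\ P^T * P = 2%:M.
  by split; rewrite /P /e1 /e2; mx2_ring.
by split; apply: (occurs_conj two0 two0 PPt PtP); rewrite !cliffE /P /e1 /e2; mx2_ring.
Qed.

End ImageSym2.

(* (x - i z)^2 is a positive multiple of p + i q; the two branches avoid the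
   zero of r + p, resp. r - p, where r = |p + i q|. *)
Lemma exists_rot_angle (R : rcfType) (p q : R) : (p != 0) || (q != 0) ->
  exists x z k : R, [/\ x ^+ 2 + z ^+ 2 != 0, k != 0,
    x ^+ 2 - z ^+ 2 = k * p & - (2 * x * z) = k * q].
Proof.
move=> pq0; pose r := Num.sqrt (p ^+ 2 + q ^+ 2).
have r2 : r ^+ 2 = p ^+ 2 + q ^+ 2 by rewrite sqr_sqrtr // addr_ge0 ?sqr_ge0.
have r_gt0 : 0 < r.
  rewrite sqrtr_gt0 lt0r paddr_eq0 ?sqr_ge0 // !sqrf_eq0 negb_and pq0.
  by rewrite addr_ge0 ?sqr_ge0.
have [p_gt0 | p_le0] := ltrP 0 p.
  by exists (r + p), (- q), (2 * (r + p)); split; nra.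
by exists q, (p - r), (2 * (r - p)); split; nra.
Qed.

Section Rotations.

Variables (R : comNzRingType) (x z : R).

Definition rotmx : 'M[R]_2 := x%:M - z *: Emx R.

Lemma rotmx_mul_tr : rotmx * rotmx^T = (x ^+ 2 + z ^+ 2)%:M.
Proof. by rewrite /rotmx /Emx /e1 /e2; mx2_ring. Qed.

Lemma tr_rotmx_mul : rotmx^T * rotmx = (x ^+ 2 + z ^+ 2)%:M.
Proof. by rewrite /rotmx /Emx /e1 /e2; mx2_ring. Qed.

Lemma rotmx_conj_diag (b : bool) :
  rotmx^T * cliff R (b, b) * rotmx = (x ^+ 2 + z ^+ 2) *: cliff R (b, b).
Proof. by case: b; rewrite cliffE /rotmx /Emx /e1 /e2; mx2_ring. Qed.

Lemma rotmx_conj_e1 :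
  rotmx^T * e1 R * rotmx = (x ^+ 2 - z ^+ 2) *: e1 R - (2 * x * z) *: e2 R.
Proof. by rewrite /rotmx /Emx /e1 /e2; mx2_ring. Qed.

Lemma rotmx_conj_e2 :
  rotmx^T * e2 R * rotmx = (2 * x * z) *: e1 R + (x ^+ 2 - z ^+ 2) *: e2 R.
Proof. by rewrite /rotmx /Emx /e1 /e2; mx2_ring. Qed.

End Rotations.

Lemma rotmx_conj_onto (R : rcfType) (y : bool) (p q : R) :
  (p != 0) || (q != 0) ->
  exists x z k : R, [/\ x ^+ 2 + z ^+ 2 != 0, k != 0 &
    (rotmx x z)^T * cliff R (y, ~~ y) * rotmx x z = k *: (p *: e1 R + q *: e2 R)].
Proof.
case: y => pq0; rewrite cliffE.
  have [x [z [k [xz0 k0 Ep Eq]]]] := exists_rot_angle pq0.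
  by exists x, z, k; split; rewrite // rotmx_conj_e1 Ep -scaleNr Eq scalerDr !scalerA.
have qp0 : (q != 0) || (- p != 0) by rewrite oppr_eq0 orbC.
have [x [z [k [xz0 k0 Eq Ep]]]] := exists_rot_angle qp0.
exists x, z, k; split => //; rewrite rotmx_conj_e2 Eq scalerDr !scalerA.
by congr (_ *: _ + _); rewrite -[LHS]opprK Ep mulrN opprK.
Qed.

Lemma memv_span_scaled (K : fieldType) (vT : vectType K) (X : seq vT) (a : K) v :
  a != 0 -> a *: v \in X -> v \in <<X>>%VS.
Proof. by move=> a0 /memv_span /(memvZ a^-1); rewrite scalerA mulVf ?scale1r. Qed.

Section Classification.

Variables (R : rcfType) (m : nat) (c : {ffun 'S_m -> R}).
Hypothesis m_gt0 : (0 < m)%N.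
Local Notation S := (image_Sym2 c).
Local Notation occ := (occurs c).

Lemma image_rot_closure (Z : 'M[R]_2) (y : bool) :
  (forall x z, (rotmx x z)^T * Z * rotmx x z = (x ^+ 2 + z ^+ 2) *: Z) ->
  (forall s t, S (s *: Z + t *: cliff R (y, ~~ y))) ->
  forall s p q, S (s *: Z + (p *: e1 R + q *: e2 R)).
Proof.
move=> rotZ SZ s p q.
have [pq0 | ] := boolP ((p != 0) || (q != 0)); last first.
  rewrite negb_or !negbK => /andP [/eqP -> /eqP ->].
  by have := SZ s 0; rewrite !scale0r !addr0.
have [x [z [k [r0 k0 conj_y]]]] := rotmx_conj_onto y pq0.
have := image_conj m_gt0 r0 (rotmx_mul_tr x z) (tr_rotmx_mul x z)
  (SZ (s / (x ^+ 2 + z ^+ 2)) k^-1).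
rewrite (mulrDr (rotmx x z)^T) (mulrDl _ _ (rotmx x z)) -!scalerAr -!scalerAl.
by rewrite rotZ conj_y !scalerA divfK // mulVf // scale1r.
Qed.

Lemma image_diag_plane b : occ (b, b) -> ~ occ (~~ b, ~~ b) -> occ (true, false) ->
  forall s p q, S (s *: cliff R (b, b) + (p *: e1 R + q *: e2 R)).
Proof.
move=> oZ nZ' o1.
have disj T : pred1 (b, b) T -> ~~ [pred T | T.1 != T.2] T.
  by move/eqP ->; rewrite /= eqxx.
have cover T : occ T -> pred1 (b, b) T || [pred T | T.1 != T.2] T.
  by case: T => [[] []]; case: b nZ' {oZ disj}.
have [TA [TB [/eqP -> TB_off span]]] := occurs_pair disj cover
  (ex_intro2 _ _ (b, b) (eqxx _) oZ) (ex_intro2 _ _ (true, false) erefl o1).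
have TBE : TB = (TB.1, ~~ TB.1) by move: TB_off; case: TB {span} => [[] []].
rewrite TBE in span.
exact (image_rot_closure (fun x z => rotmx_conj_diag x z b) span).
Qed.

Lemma image_line_iff T : occ T -> (forall U, U != T -> ~ occ U) ->
  forall X, S X <-> exists t, X = t *: cliff R T.
Proof.
move=> oT nU X; split => [SX | [t ->]]; last exact: image_line.
exists (cliff_coord T X).
rewrite [LHS]cliff_coord_decomp (bigD1 T) //= big1 ?addr0 // => U UT.
by rewrite (cliff_coord_image (nU U UT) SX) scale0r.
Qed.

Lemma image_zero :
  ~ occ (false, false) -> ~ occ (true, true) -> ~ occ (true, false) ->
  forall X, S X <-> X = 0.
Proof.
move=> nI nE n1 X; split => [SX | ->]; last exact: image0.
have n2 : ~ occ (false, true) by rewrite -occurs_e1_e2.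
rewrite (cliff_coord_decompE X) (cliff_coord_image nI SX) (cliff_coord_image nE SX).
by rewrite (cliff_coord_image n1 SX) (cliff_coord_image n2 SX) !scale0r !addr0.
Qed.

Lemma image_skew :
  ~ occ (false, false) -> occ (true, true) -> ~ occ (true, false) ->
  forall X, S X <-> exists t, X = t *: Emx R.
Proof.
move=> nI oE n1; have n2 : ~ occ (false, true) by rewrite -occurs_e1_e2.
by rewrite -cliffE; apply: image_line_iff => // -[[] []].
Qed.

Lemma image_scalar :
  occ (false, false) -> ~ occ (true, true) -> ~ occ (true, false) ->
  forall X, S X <-> exists t, X = t%:M.
Proof.
move=> oI nE n1 X; have n2 : ~ occ (false, true) by rewrite -occurs_e1_e2.
rewrite (image_line_iff oI); last by case=> [[] []].
by rewrite cliffE; split=> -[t ->]; exists t; rewrite scalemx1.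
Qed.

Lemma image_sym_traceless :
  ~ occ (false, false) -> ~ occ (true, true) -> occ (true, false) ->
  forall X, S X <-> exists s t, X = s *: e1 R + t *: e2 R.
Proof.
move=> nI nE o1 X; split => [SX | [s [t ->]]].
  exists (cliff_coord (true, false) X), (cliff_coord (false, true) X).
  rewrite [LHS]cliff_coord_decompE (cliff_coord_image nI SX).
  by rewrite (cliff_coord_image nE SX) !scale0r add0r addr0.
have rot0 (x z : R) : (rotmx x z)^T * 0 * rotmx x z = (x ^+ 2 + z ^+ 2) *: 0.
  by rewrite mulr0 mul0r scaler0.
have line1 s' t' : S (s' *: 0 + t' *: cliff R (true, ~~ true)).
  by rewrite scaler0 add0r; apply: image_line.
by have := image_rot_closure rot0 line1 0 s t; rewrite scaler0 add0r.
Qed.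

Lemma image_scalar_skew :
  occ (false, false) -> occ (true, true) -> ~ occ (true, false) ->
  forall X, S X <-> exists s t, X = s%:M + t *: Emx R.
Proof.
move=> oI oE n1 X; have n2 : ~ occ (false, true) by rewrite -occurs_e1_e2.
split => [SX | [s [t ->]]].
  exists (cliff_coord (false, false) X), (cliff_coord (true, true) X).
  rewrite [LHS]cliff_coord_decompE (cliff_coord_image n1 SX).
  by rewrite (cliff_coord_image n2 SX) !scale0r !addr0 scalemx1.
have disj T : pred1 (false, false) T -> ~~ pred1 (true, true) T by move/eqP ->.
have cover T : occ T -> pred1 (false, false) T || pred1 (true, true) T.
  by case: T => [[] []].
have [_ [_ [/eqP -> /eqP -> span]]] := occurs_pair disj cover
  (ex_intro2 _ _ (false, false) (eqxx _) oI) (ex_intro2 _ _ (true, true) (eqxx _) oE).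
by move: (span s t); rewrite !cliffE scalemx1.
Qed.

Lemma image_traceless :
  ~ occ (false, false) -> occ (true, true) -> occ (true, false) ->
  forall X, S X <-> \tr X = 0.
Proof.
move=> nI oE o1 X; split => [SX | trX].
  have := cliff_coord_image nI SX; rewrite cliff_coord_tr => /eqP.
  by rewrite mulf_eq0 invr_eq0 pnatr_eq0 orbF => /eqP.
have -> : X = cliff_coord (true, true) X *: cliff R (true, true) +
    (cliff_coord (true, false) X *: e1 R + cliff_coord (false, true) X *: e2 R).
  rewrite cliffE {1}[X]cliff_coord_decompE cliff_coord_tr trX mul0r scale0r add0r.
  by rewrite addrC.
exact: image_diag_plane.
Qed.

Lemma image_sym :
  occ (false, false) -> ~ occ (true, true) -> occ (true, false) ->
  forall X, S X <-> X^T = X.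
Proof.
move=> oI nE o1 X; split => [SX | symX].
  rewrite [X]cliff_coord_decompE (cliff_coord_image nE SX) scale0r addr0.
  by rewrite /e1 /e2; mx2_ring.
have -> : X = cliff_coord (false, false) X *: cliff R (false, false) +
    (cliff_coord (true, false) X *: e1 R + cliff_coord (false, true) X *: e2 R).
  by rewrite cliffE {1}[X]cliff_coord_decompE cliff_coord_sym // scale0r addr0 !addrA.
exact: image_diag_plane.
Qed.

Lemma image_basis :
  occ (false, false) -> occ (true, true) -> occ (true, false) ->
  exists B : seq 'M[R]_2, (forall X, X \in B -> S X) /\ basis_of fullv B.
Proof.
move=> oI oE o1; have o2 := (occurs_e1_e2 c m_gt0).1 o1.
have [a a0 Sa] := occursP oI; have [b b0 Sb] := occursP o1.
have [d d0 Sd] := occursP o2; have [e e0 Se] := occursP oE.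
set B := [:: a *: cliff R (false, false); b *: cliff R (true, false);
             d *: cliff R (false, true); e *: cliff R (true, true)].
exists B; split; first by move=> X; rewrite !inE => /or4P [] /eqP ->.
rewrite basisEdim size_tuple dimvf dim_matrix leqnn andbT.
apply/subvP => X _; rewrite [X]cliff_coord_decompE -!cliffE.
by rewrite !memvD ?memvZ //;
  [apply: (memv_span_scaled a0) | apply: (memv_span_scaled b0)
  | apply: (memv_span_scaled d0) | apply: (memv_span_scaled e0)];
  rewrite !inE eqxx ?orbT.
Qed.

End Classification.

Theorem mainTheorem1 (R : realType) (m : nat) (hm : (0 < m)%N)
    (c : {ffun 'S_m -> R}) :
  let S := image_Sym2 c in
  (forall X, S X <-> X = 0) \/
  (forall X, S X <-> exists t : R, X = t *: Emx R) \/
  (forall X, S X <-> exists t : R, X = t%:M) \/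
  (forall X, S X <-> exists s t : R, X = s *: e1 R + t *: e2 R) \/
  (forall X, S X <-> exists s t : R, X = s%:M + t *: Emx R) \/
  (forall X, S X <-> \tr X = 0) \/
  (forall X, S X <-> X^T = X) \/
  (exists B : seq 'M[R]_2, (forall X, X \in B -> S X) /\ basis_of fullv B).
Proof.
move=> S.
have [oI|nI] := EM (occurs c (false, false));
have [oE|nE] := EM (occurs c (true, true));
have [o1|n1] := EM (occurs c (true, false)).
- by do 7 right; apply: image_basis.
- by do 4 right; left; apply: image_scalar_skew.
- by do 6 right; left; apply: image_sym.
- by do 2 right; left; apply: image_scalar.
- by do 5 right; left; apply: image_traceless.
- by right; left; apply: image_skew.
- by do 3 right; left; apply: image_sym_traceless.
- by left; apply: image_zero.
Qed.
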